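(* Let $(M,g)$ be a complete oriented four-dimensional Einstein manifold with $\mathrm{Ric}=g$ whose sectional curvature satisfies $K\le \frac{\sqrt3}{2}$. Fix $o\in M$ and a Berger basis $\{e_1,\dots,e_4\}$ at $o$ (see context), and let $a_1,a_2,a_3,c_1,c_2,c_3$ and $I$ be defined from it as in the context. Suppose that at $o$ the minimal sectional curvature satisfies $K_{12}\le-\epsilon<0$ for some constant $\epsilon>0$. Then: (1) if $a_2\ge 0$ and $c_2\ge 0$, then $I\ge \frac{16}{3}\epsilon$; (2) if $a_2<0$ or $c_2<0$, then $I>\frac14\epsilon$.
   Context: Curvature conventions: $R_{ijkl}=R(e_i,e_j,e_k,e_l)$ with $K_{ij}=R_{ijij}$ the sectional curvature of the plane spanned by $e_i,e_j$. A Berger basis at $o$ is a positively oriented orthonormal basis $\{e_i\}$ of $T_oM$ such that: (1) $K_{12}=\min\{K(\pi):\pi\subset T_oM\}$; (2) $K_{14}=\max\{K(\pi):\pi\subset T_oM\}$; (3) $R_{ikjk}=0$ for all $i\ne j$; (4) $|R_{1342}-R_{1234}|\le K_{13}-K_{12}$, $|R_{1423}-R_{1342}|\le K_{14}-K_{13}$, $|R_{1423}-R_{1234}|\le K_{14}-K_{12}$ (such a basis exists at every point of an oriented Einstein four-manifold, by Berger). Define $a_1=2(K_{12}+R_{1234})$, $a_2=2(K_{13}+R_{1342})$, $a_3=2(K_{14}+R_{1423})$, $c_1=2(K_{12}-R_{1234})$, $c_2=2(K_{13}-R_{1342})$, $c_3=2(K_{14}-R_{1423})$; these are the eigenvalues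 of the curvature operator restricted to self-dual and anti-self-dual 2-forms respectively, with $a_1\le a_2\le a_3$ and $c_1\le c_2\le c_3$. Define $$I=(c_2-c_1)c_3+(c_3-c_1)c_2+(a_2-a_1)a_3+(a_3-a_1)a_2 .$$ *)

(* Pointwise (algebraic) model of the curvature tensor of an
   oriented Riemannian 4-manifold at a point o, written in components with
   respect to the (Berger) orthonormal basis e_1..e_4 = standard basis of R^4. *)
From HB Require Import structures.
From mathcomp Require Import all_boot all_order all_algebra.
From mathcomp Require Import reals.
Set Implicit Arguments. Unset Strict Implicit. Unset Printing Implicit Defensive.
Import Order.TTheory GRing.Theory Num.Theory.
Local Open Scope ring_scope.

(* components R_{ijkl} = R(e_i,e_j,e_k,e_l), indices 0..3 standing for 1..4 *)
Definition tensor4 (R : realType) := 'I_4 -> 'I_4 -> 'I_4 -> 'I_4 -> R.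

Definition e1 : 'I_4 := @Ordinal 4 0 isT.
Definition e2 : 'I_4 := @Ordinal 4 1 isT.
Definition e3 : 'I_4 := @Ordinal 4 2 isT.
Definition e4 : 'I_4 := @Ordinal 4 3 isT.

Definition curvature_tensor (R : realType) (Rm : tensor4 R) : Prop :=
  [/\ (forall i j k l, Rm i j k l = - Rm j i k l),
      (forall i j k l, Rm i j k l = - Rm i j l k),
      (forall i j k l, Rm i j k l = Rm k l i j) &
      (forall i j k l, Rm i j k l + Rm j k i l + Rm k i j l = 0)].

Definition Reval (R : realType) (Rm : tensor4 R) (u v w z : 'I_4 -> R) : R :=
  \sum_i \sum_j \sum_k \sum_l u i * v j * w k * z l * Rm i j k l.

Definition orthonormal2 (R : realType) (u v : 'I_4 -> R) : Prop :=
  [/\ \sum_i u i * u i = 1, \sum_i v i * v i = 1 & \sum_i u i * v i = 0].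

Definition sec (R : realType) (Rm : tensor4 R) (u v : 'I_4 -> R) : R :=
  Reval Rm u v u v.

Definition einstein_Ric_eq_g (R : realType) (Rm : tensor4 R) : Prop :=
  forall i j, \sum_k Rm i k j k = (i == j)%:R.

Definition Kc (R : realType) (Rm : tensor4 R) (i j : 'I_4) : R := Rm i j i j.

Definition berger_basis (R : realType) (Rm : tensor4 R) : Prop :=
  [/\ (forall u v, orthonormal2 u v -> Kc Rm e1 e2 <= sec Rm u v),
      (forall u v, orthonormal2 u v -> sec Rm u v <= Kc Rm e1 e4),
      (forall i j k, i != j -> Rm i k j k = 0) &
      [/\ `|Rm e1 e3 e4 e2 - Rm e1 e2 e3 e4| <= Kc Rm e1 e3 - Kc Rm e1 e2,
          `|Rm e1 e4 e2 e3 - Rm e1 e3 e4 e2| <= Kc Rm e1 e4 - Kc Rm e1 e3 &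
          `|Rm e1 e4 e2 e3 - Rm e1 e2 e3 e4| <= Kc Rm e1 e4 - Kc Rm e1 e2]].

Section ACdefs.
Variables (R : realType) (Rm : tensor4 R).
Definition a1 := 2 * (Kc Rm e1 e2 + Rm e1 e2 e3 e4).
Definition a2 := 2 * (Kc Rm e1 e3 + Rm e1 e3 e4 e2).
Definition a3 := 2 * (Kc Rm e1 e4 + Rm e1 e4 e2 e3).
Definition c1 := 2 * (Kc Rm e1 e2 - Rm e1 e2 e3 e4).
Definition c2 := 2 * (Kc Rm e1 e3 - Rm e1 e3 e4 e2).
Definition c3 := 2 * (Kc Rm e1 e4 - Rm e1 e4 e2 e3).
Definition Iq := (c2 - c1) * c3 + (c3 - c1) * c2 + (a2 - a1) * a3 + (a3 - a1) * a2.
End ACdefs.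

(* Since Ric = g, the Bianchi identity gives a1 + a2 + a3 = c1 + c2 + c3 = 2, the Berger
   conditions order both triples, and a1 + c1 = 4 K12 <= -4 eps, a3 + c3 = 4 K14 <= 2 sqrt 3.
   Writing J(x) := (x2 - x1) x3 + (x3 - x1) x2, so that I = J(c) + J(a), one has
   J(x) = 2 x2 x3 + x1^2 - 2 x1 on a triple of sum 2; this settles the case a2, c2 >= 0.
   If say a2 < 0, then 16 (J(a) + J(c)) > -(a1 + c1) is a polynomial inequality on the
   polytope cut out by the constraints above; it becomes an equality at the vertex where
   a1 = a2, c2 = c3, a1 + c1 = 0 and a3 + c3 = 2 sqrt 3, and a Positivstellensatz
   certificate proves it. *)
From HB Require Import structures.
From mathcomp Require Import all_boot all_order all_algebra.
From mathcomp Require Import reals.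
From mathcomp Require Import ring lra.
Set Implicit Arguments. Unset Strict Implicit. Unset Printing Implicit Defensive.
Import Order.TTheory GRing.Theory Num.Theory.
Local Open Scope ring_scope.

Lemma sum_ord4 (R : nmodType) (F : 'I_4 -> R) :
  \sum_i F i = F e1 + F e2 + F e3 + F e4.
Proof.
rewrite !big_ord_recl big_ord0 addr0 !addrA.
by congr (_ + _ + _ + _); congr F; apply: val_inj.
Qed.

Definition basis_vec (R : realType) (a : 'I_4) : 'I_4 -> R := fun i => (i == a)%:R.

Lemma sum_basis_vec_mul (R : realType) (a : 'I_4) (F : 'I_4 -> R) :
  \sum_i basis_vec R a i * F i = F a.
Proof.
rewrite (bigD1 a) //= /basis_vec eqxx mul1r big1 ?addr0 // => i /negbTE ->.
by rewrite mul0r.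
Qed.

Lemma Reval_basis_vec (R : realType) (Rm : tensor4 R) (a b c d : 'I_4) :
  Reval Rm (basis_vec R a) (basis_vec R b) (basis_vec R c) (basis_vec R d) = Rm a b c d.
Proof.
rewrite /Reval -(sum_basis_vec_mul a (fun i => Rm i b c d)); apply: eq_bigr => i _.
rewrite -(sum_basis_vec_mul b (fun j => Rm i j c d)) mulr_sumr; apply: eq_bigr => j _.
rewrite -(sum_basis_vec_mul c (fun k => Rm i j k d)) !mulr_sumr; apply: eq_bigr => k _.
rewrite -(sum_basis_vec_mul d (fun l => Rm i j k l)) !mulr_sumr; apply: eq_bigr => l _.
by rewrite !mulrA.
Qed.

Lemma sec_basis_vec (R : realType) (Rm : tensor4 R) (a b : 'I_4) :
  sec Rm (basis_vec R a) (basis_vec R b) = Kc Rm a b.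
Proof. exact: Reval_basis_vec. Qed.

Lemma orthonormal2_basis_vec (R : realType) (a b : 'I_4) :
  a != b -> orthonormal2 (basis_vec R a) (basis_vec R b).
Proof.
move=> neq_ab; split; rewrite sum_basis_vec_mul /basis_vec ?eqxx //.
by rewrite (negbTE neq_ab).
Qed.

Section BergerEigenvalues.
Variables (R : realType) (Rm : tensor4 R).
Hypotheses (HRm : curvature_tensor Rm) (Hric : einstein_Ric_eq_g Rm)
  (Hberger : berger_basis Rm).

Lemma sec_sum_e1 : Kc Rm e1 e2 + Kc Rm e1 e3 + Kc Rm e1 e4 = 1.
Proof.
case: HRm => skew _ _ _.
have R1111 : Rm e1 e1 e1 e1 = 0 by have := skew e1 e1 e1 e1; lra.
by have := Hric e1 e1; rewrite sum_ord4 eqxx R1111 add0r.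
Qed.

Lemma bianchi_e1 : Rm e1 e2 e3 e4 + Rm e1 e3 e4 e2 + Rm e1 e4 e2 e3 = 0.
Proof.
case: HRm => skew1 skew2 pair bianchi.
have := bianchi e1 e2 e3 e4; have := pair e2 e3 e1 e4.
have := skew1 e3 e1 e2 e4; have := skew2 e1 e3 e2 e4; lra.
Qed.

Lemma a_sum : a1 Rm + a2 Rm + a3 Rm = 2.
Proof. by have := sec_sum_e1; have := bianchi_e1; rewrite /a1 /a2 /a3; lra. Qed.

Lemma c_sum : c1 Rm + c2 Rm + c3 Rm = 2.
Proof. by have := sec_sum_e1; have := bianchi_e1; rewrite /c1 /c2 /c3; lra. Qed.

Lemma a_sorted : a1 Rm <= a2 Rm <= a3 Rm.
Proof.
case: Hberger => _ _ _ [+ + _]; rewrite !ler_norml => /andP[h12 h12'] /andP[h23 h23'].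
by apply/andP; rewrite /a1 /a2 /a3 /Kc in h12 h12' h23 h23' *; split; lra.
Qed.

Lemma c_sorted : c1 Rm <= c2 Rm <= c3 Rm.
Proof.
case: Hberger => _ _ _ [+ + _]; rewrite !ler_norml => /andP[h12 h12'] /andP[h23 h23'].
by apply/andP; rewrite /c1 /c2 /c3 /Kc in h12 h12' h23 h23' *; split; lra.
Qed.

End BergerEigenvalues.

Lemma a1_add_c1 (R : realType) (Rm : tensor4 R) : a1 Rm + c1 Rm = 4 * Kc Rm e1 e2.
Proof. by rewrite /a1 /c1; ring. Qed.

Lemma a3_add_c3 (R : realType) (Rm : tensor4 R) : a3 Rm + c3 Rm = 4 * Kc Rm e1 e4.
Proof. by rewrite /a3 /c3; ring. Qed.

Definition pair_form (R : pzRingType) (x1 x2 x3 : R) : R :=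
  (x2 - x1) * x3 + (x3 - x1) * x2.

Lemma Iq_pair_form (R : realType) (Rm : tensor4 R) :
  Iq Rm = pair_form (c1 Rm) (c2 Rm) (c3 Rm) + pair_form (a1 Rm) (a2 Rm) (a3 Rm).
Proof. by rewrite /Iq /pair_form !addrA. Qed.

Lemma pair_form_ge (R : realFieldType) (x1 x2 x3 : R) :
  x1 + x2 + x3 = 2 -> 0 <= x2 <= x3 -> - 2 * x1 <= pair_form x1 x2 x3.
Proof.
move=> sum_x /andP[x2_ge0 x23].
have -> : pair_form x1 x2 x3 = 2 * (x2 * x3) + x1 ^+ 2 - 2 * x1.
  by rewrite /pair_form (_ : x3 = 2 - x1 - x2); [ring | lra].
have : 0 <= x2 * x3 by apply: mulr_ge0; lra.
have := sqr_ge0 x1; lra.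
Qed.

Lemma pair_form_add_gt (R : realFieldType) (s x1 x2 x3 y1 y2 y3 : R) :
  s * s = 3 -> 0 < s -> x1 + x2 + x3 = 2 -> y1 + y2 + y3 = 2 ->
  x1 <= x2 -> y2 <= y3 -> x3 + y3 <= 2 * s -> x2 < 0 -> x1 + y1 < 0 ->
  - (x1 + y1) < 16 * (pair_form x1 x2 x3 + pair_form y1 y2 y3).
Proof.
move=> s2 s_gt0 sum_x sum_y x12 y23 top x2_lt0 bot.
have s_gt : 3 / 2 < s by nra.
have s_lt : s < 2 by nra.
have def_x3 : x3 = 2 - x1 - x2 by lra.
have def_y3 : y3 = 2 - y1 - y2 by lra.
subst x3 y3; rewrite /pair_form.
(* P is minus the value of x2 at the vertex of equality; it solves 3 P^2 + 12 P = 4. *)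
set P := (4 * s - 6) / 3.
have x2_ge : 0 <= P + x2 by rewrite /P; lra.
have k1 : 0 <= (2 * s - (2 - x1 - x2) - (2 - y1 - y2)) * (P - x2 + 4).
  by apply: mulr_ge0; lra.
have k2 : 0 <= - (x1 + y1) * (P - x2) by apply: mulr_ge0; lra.
have k3 : 0 <= (x2 - x1) * (P - x2) by apply: mulr_ge0; lra.
have k4 : 0 <= (2 - y1 - y2 - y2) * (P - x2) by apply: mulr_ge0; lra.
have k5 : 0 <= (2 - y1 - y2 - y2) * (4 - (2 - y1 - y2 - y2)) by apply: mulr_ge0; lra.
have k6 : 0 <= (2 + 3 * x2) * - (x1 + y1) by apply: mulr_ge0; lra.
have k7 : 0 <= - x2 * (x2 - x1) by apply: mulr_ge0; lra.
have k8 : 0 <= (x2 + y1) ^+ 2 by apply: sqr_ge0.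
have k9 : 0 <= (x2 - x1) ^+ 2 by apply: sqr_ge0.
rewrite /P in k1 k2 k3 k4; lra.
Qed.

Theorem lemma2p2 (R : realType) (Rm : tensor4 R) (eps : R) :
  curvature_tensor Rm ->
  einstein_Ric_eq_g Rm ->
  (forall u v : 'I_4 -> R, orthonormal2 u v -> sec Rm u v <= Num.sqrt 3 / 2) ->
  berger_basis Rm ->
  0 < eps -> Kc Rm e1 e2 <= - eps ->
  ((0 <= a2 Rm -> 0 <= c2 Rm -> 16 / 3 * eps <= Iq Rm) /\
   (a2 Rm < 0 \/ c2 Rm < 0 -> eps / 4 < Iq Rm)).
Proof.
move=> HRm Hric pinched Hberger eps_gt0 K12_le.
set s := Num.sqrt (3 : R).
have s2 : s * s = 3 by rewrite -expr2 sqr_sqrtr.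
have s_gt0 : 0 < s by rewrite sqrtr_gt0.
have K14_le : Kc Rm e1 e4 <= s / 2.
  by rewrite -sec_basis_vec; apply: pinched; apply: orthonormal2_basis_vec.
have top : a3 Rm + c3 Rm <= 2 * s by rewrite a3_add_c3; lra.
have bot : a1 Rm + c1 Rm <= - 4 * eps by rewrite a1_add_c1; lra.
have sum_a := a_sum HRm Hric; have sum_c := c_sum HRm Hric.
have /andP[a12 a23] := a_sorted Hberger; have /andP[c12 c23] := c_sorted Hberger.
rewrite Iq_pair_form; split.
- move=> a2_ge0 c2_ge0.
  have := pair_form_ge sum_a (introT andP (conj a2_ge0 a23)).
  have := pair_form_ge sum_c (introT andP (conj c2_ge0 c23)); lra.
- case=> [a2_lt0 | c2_lt0].
  + have := pair_form_add_gt s2 s_gt0 sum_a sum_c a12 c23; lra.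
  + have := pair_form_add_gt s2 s_gt0 sum_c sum_a c12 a23; lra.
Qed.
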